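(* Let $\mu>0$. For $T_0\in\mathcal T_{\rm fin}$ of height $r$ with $K=|D_r(T_0)|$ define $$\Xi(T_0)=e^{-\mu(r-1)}4^{-|T_0|}2^{K+1}\sum_{R=1}^K\binom KR\frac{\mu^{R-1}}{(R-1)!}.$$ Then $\sum_{T_0\in\mathcal T_{\rm fin}:\,h(T_0)=r}\Xi(T_0)=1$ for every $r\ge1$.
   Context: Rooted planar trees (root of degree 1); $D_r(T)$ = vertices at height $r$; $|T|$ = number of edges; $h(T)$ = height; $\mathcal T_{\rm fin}$ = finite trees. *)

From HB Require Import structures.
From mathcomp Require Import all_boot all_order all_algebra.
From mathcomp Require Import all_classical all_reals all_analysis.
Set Implicit Arguments. Unset Strict Implicit. Unset Printing Implicit Defensive.
Import Order.TTheory GRing.Theory Num.Theory.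

Inductive ptree := PNode of seq ptree.

Fixpoint ptree_enc (t : ptree) : GenTree.tree unit :=
  match t with PNode ts => GenTree.Node 0 (map ptree_enc ts) end.
Fixpoint ptree_dec (g : GenTree.tree unit) : ptree :=
  match g with
  | GenTree.Leaf _ => PNode [::]
  | GenTree.Node _ gs => PNode (map ptree_dec gs)
  end.

Fixpoint ptree_encK (t : ptree) : ptree_dec (ptree_enc t) = t :=
  match t with
  | PNode ts =>
    f_equal PNode
      ((fix aux (s : seq ptree) : map ptree_dec (map ptree_enc s) = s :=
          match s with
          | [::] => erefl
          | x :: s' => f_equal2 cons (ptree_encK x) (aux s')
          end) ts)
  end.

HB.instance Definition _ := Equality.copy ptree (can_type ptree_encK).
HB.instance Definition _ := Choice.copy ptree (can_type ptree_encK).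
HB.instance Definition _ := Countable.copy ptree (can_type ptree_encK).

Fixpoint nverts (t : ptree) : nat :=
  match t with PNode ts => (sumn (map nverts ts)).+1 end.

(* |T| = number of edges *)
Definition nedges (t : ptree) : nat := (nverts t).-1.

Fixpoint height (t : ptree) : nat :=
  match t with
  | PNode [::] => 0
  | PNode ts => (foldr maxn 0 (map height ts)).+1
  end.

(* |D_r(T)| = number of vertices at height (depth) r *)
Fixpoint nlevel (r : nat) (t : ptree) : nat :=
  match r, t with
  | 0, _ => 1
  | r'.+1, PNode ts => sumn (map (nlevel r') ts)
  end.

(* T_fin: finite rooted planar trees whose root has degree 1 *)
Definition root_deg1 (t : ptree) : bool :=
  match t with PNode ts => size ts == 1 end.

Local Open Scope ring_scope.

Definition Xi (R : realType) (mu : R) (t : ptree) : R :=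
  let r := height t in
  let K := nlevel r t in
  expR (- mu * (r%:R - 1)) * (4%:R ^+ nedges t)^-1 * 2%:R ^+ K.+1 *
  \sum_(1 <= j < K.+1) ('C(K, j))%:R * mu ^+ j.-1 / (j.-1)`!%:R.

From HB Require Import structures.
From mathcomp Require Import all_boot all_order all_algebra.
From mathcomp Require Import all_classical all_reals all_analysis.
From mathcomp Require Import ring lra zify.
Import Order.TTheory GRing.Theory Num.Theory.
Local Open Scope classical_set_scope.
Local Open Scope ring_scope.

(* Removing the root edge, the trees of height n.+1 are the planted trees
   over the trees s of height n, and Xi of such a tree is
   e^{-mu n} / 2 * 4^{-|s|} 2^K * \sum_i 'C(K, i.+1) mu^i / i!  with K = |D_n(s)|.
   Summing over s thus amounts to computing the binomial moments
   M_n(j) = \sum_{h(s) <= n} 4^{-|s|} 2^{|D_n(s)|} 'C(|D_n(s)|, j)  ([level_moment]).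
   Their generating function G_n(x) = \sum_s 4^{-|s|} 2^{|D_n(s)|} (1 + x)^{|D_n(s)|}
   satisfies G_0 = 2 (1 + x) and, splitting a tree at its root into a forest of
   subtrees, G_{n+1} = \sum_d (G_n / 4)^d = 1 / (1 - G_n / 4); hence
   G_n = 2 (1 - (n - 1) x) / (1 - n x), i.e. M_n(j.+1) = 2 n^j, and the sum is
   e^{-mu n} / 2 * \sum_i mu^i / i! * 2 n^i = 1. *)

Section ExtendedSums.
Context {R : realType}.
Local Open Scope ereal_scope.

Lemma esumZl (T : choiceType) (I : set T) (a : T -> \bar R) (r : R) :
  (0 <= r)%R -> (forall i, 0 <= a i) ->
  \esum_(i in I) (r%:E * a i) = r%:E * \esum_(i in I) a i.
Proof.
move=> r_ge0 a_ge0; rewrite /esum -ereal_supZl //; last first.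
  by apply/set0P; exists (\sum_(i \in set0) a i); exists set0 => //; exact: fsets_set0.
congr ereal_sup; apply/seteqP; split => x /=.
- move=> [A [finA AI] <-]; exists (\sum_(i \in A) a i); first by exists A.
  by rewrite !fsbig_finite //= ge0_sume_distrr.
- move=> [_ [A [finA AI] <-] <-]; exists A => //.
  by rewrite !fsbig_finite //= ge0_sume_distrr.
Qed.

Lemma exchange_esum (T1 T2 : choiceType) (a : T1 -> T2 -> \bar R) :
  (forall i j, 0 <= a i j) ->
  \esum_(i in [set: T1]) \esum_(j in [set: T2]) a i j =
  \esum_(j in [set: T2]) \esum_(i in [set: T1]) a i j.
Proof.
move=> a_ge0; rewrite !(@esum_esum _ _ _ setT (fun=> setT)) //.
rewrite (reindex_esum (setT `*`` fun=> setT) _ (fun x => (x.2, x.1))) //.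
split=> [//|[i1 i2] [j1 j2] _ _ [-> ->] //|[i1 i2] _]; by exists (i2, i1).
Qed.

Lemma expR_eseries (x : R) :
  \sum_(i <oo) (x ^+ i / i`!%:R)%:E = (expR x)%:E.
Proof.
rewrite expRE -EFin_lim; last first.
  by rewrite /pseries /=; under eq_fun do rewrite mulrC; exact: is_cvg_series_exp_coeff.
apply/congr_lim/funext => m; rewrite /pseries /series /= -sumEFin.
by under eq_bigr do rewrite mulrC.
Qed.

End ExtendedSums.

Section ConvolutionPowers.
Context {R : realType}.
Variable a : nat -> R.
Hypothesis a_ge0 : forall i, 0 <= a i.

Fixpoint convpow (d j : nat) : R :=
  if d is d'.+1 then \sum_(i < j.+1) a i * convpow d' (j - i) else (j == 0)%:R.

Lemma convpow_ge0 d j : 0 <= convpow d j.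
Proof.
elim: d j => [|d IH] j /=; first exact: ler0n.
by apply: sumr_ge0 => i _; rewrite mulr_ge0.
Qed.

Variable b : nat -> R.
Hypothesis b_ge0 : forall j, 0 <= b j.
Hypothesis b_rec : forall j, b j = (j == 0)%:R + \sum_(i < j.+1) a i * b (j - i).

Lemma sum_convpow_le D j : \sum_(d < D) convpow d j <= b j.
Proof.
elim: D j => [|D IH] j; first by rewrite big_ord0.
rewrite big_ord_recl b_rec lerD2l /= exchange_big /=.
by apply: ler_sum => i _; rewrite -mulr_sumr ler_wpM2l.
Qed.

Local Open Scope ereal_scope.

Lemma convpow_eseries_le j : \sum_(d <oo) (convpow d j)%:E <= (b j)%:E.
Proof.
apply: lime_le; first by apply: is_cvg_nneseries => d _; rewrite lee_fin convpow_ge0.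
by apply: nearW => D; rewrite sumEFin lee_fin big_mkord; exact: sum_convpow_le.
Qed.

Lemma convpow_eseries_rec j : \sum_(d <oo) (convpow d j)%:E =
  (j == 0)%:R%:E + \sum_(i < j.+1) (a i)%:E * \sum_(d <oo) (convpow d (j - i))%:E.
Proof.
rewrite nneseries_recl //; last by move=> d _; rewrite lee_fin convpow_ge0.
congr (_ + _).
rewrite -(@nneseries_addn _ (fun d => (convpow d j)%:E) 1); last first.
  by move=> d; rewrite lee_fin convpow_ge0.
under eq_eseriesr => d _ do rewrite addn1 /= -sumEFin.
rewrite nneseries_sum; last by move=> i d _; rewrite lee_fin mulr_ge0 ?convpow_ge0.
apply: eq_bigr => i _; under eq_eseriesr do rewrite EFinM.
by rewrite nneseriesZl // => d _; rewrite lee_fin convpow_ge0.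
Qed.

(* For generating functions: B = 1 + A B forces B = \sum_d A ^ d; the
   coefficient a 0 != 1 is what makes b j determined by the b i, i < j. *)
Hypothesis a0_neq1 : a 0 != 1%R.

Lemma convpow_eseries j : \sum_(d <oo) (convpow d j)%:E = (b j)%:E.
Proof.
elim/ltn_ind: j => j IH.
have [x Ex] : exists x, \sum_(d <oo) (convpow d j)%:E = x%:E.
  move: (convpow_eseries_le j); have : 0 <= \sum_(d <oo) (convpow d j)%:E.
    by apply: nneseries_ge0 => d _; rewrite lee_fin convpow_ge0.
  by case: (\sum_(d <oo) _) => // x _ _; exists x.
rewrite Ex; congr (_%:E).
have := convpow_eseries_rec j; rewrite big_ord_recl subn0 Ex.
have -> : \sum_(i < j) (a (bump 0 i))%:E * \sum_(d <oo) (convpow d (j - bump 0 i))%:E =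
    (\sum_(i < j) a (bump 0 i) * b (j - bump 0 i))%:E.
  rewrite -sumEFin; apply: eq_bigr => i _; rewrite IH ?EFinM //.
  by have := ltn_ord i; rewrite /bump /=; lia.
rewrite -EFinM -!EFinD => -[{}Ex].
set S := (\sum_(i < j) _)%R in Ex.
have Ey : b j = ((j == 0)%:R + (a 0 * b j + S))%R.
  by rewrite {1}b_rec big_ord_recl subn0.
have Exy : (x - b j = a 0 * (x - b j))%R by rewrite {1}Ex {1}Ey; ring.
have : ((1 - a 0) * (x - b j) = 0)%R by rewrite mulrBl mul1r -Exy subrr.
by move/eqP; rewrite mulf_eq0 subr_eq0 eq_sym (negbTE a0_neq1) /= subr_eq0 => /eqP.
Qed.

End ConvolutionPowers.

Section SequencesOfSize.
Context {R : realType} {T : choiceType}.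
Local Open Scope ereal_scope.

Lemma esum_size0 (f : seq T -> \bar R) :
  0 <= f [::] -> \esum_(s in [set s | size s = 0%N]) f s = f [::].
Proof.
move=> f0_ge0; have -> : [set s : seq T | size s = 0%N] = [set [::]].
  by apply/seteqP; split => s /=; [move/size0nil | move=> ->].
exact: esum_set1.
Qed.

Lemma esum_sizeS (f : seq T -> \bar R) d : (forall s, 0 <= f s) ->
  \esum_(s in [set s | size s = d.+1]) f s =
  \esum_(x in [set: T]) \esum_(s in [set s | size s = d]) f (x :: s).
Proof.
move=> f_ge0; rewrite (@esum_esum _ _ _ setT (fun=> [set s | size s = d])) //.
rewrite -(esum_image _ (fun p => p.1 :: p.2)); last by move=> [? ?] [? ?] _ _ /= [-> ->].
have -> // : [set s | size s = d.+1] =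
    (fun p => p.1 :: p.2) @` ([set: T] `*`` fun=> [set s | size s = d]).
apply/seteqP; split=> [[|x s] //= [size_s]|_ [[x s] [_ /= size_s] <-]] /=.
- by exists (x, s).
- by rewrite size_s.
Qed.

End SequencesOfSize.

Lemma sumn_map_gt0 (T : Type) (f : T -> nat) (s : seq T) :
  (0 < sumn (map f s))%N = has (fun x => 0 < f x)%N s.
Proof. by elim: s => [|x s IH] //=; rewrite addn_gt0 IH. Qed.

Lemma leq_foldr_maxn (T : Type) (f : T -> nat) (n : nat) (s : seq T) :
  (n <= foldr maxn 0 (map f s))%N = (n == 0) || has (fun x => n <= f x)%N s.
Proof.
elim: s => [|x s IH] /=; first by rewrite leqn0 orbF.
by rewrite leq_max IH orbCA.
Qed.

Lemma nverts_nedges (t : ptree) : nverts t = (nedges t).+1.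
Proof. by case: t. Qed.

Lemma nlevel_gt0 (n : nat) (t : ptree) : (0 < nlevel n t)%N = (n <= height t)%N.
Proof.
elim: n t => [|n IH] [[|t ts]] //=.
rewrite ltnS leq_max leq_foldr_maxn addn_gt0 sumn_map_gt0 IH (eq_has IH).
by case: n {IH}.
Qed.

Lemma height_eqE (n : nat) (t : ptree) :
  (height t == n) = (nlevel n.+1 t == 0) && (0 < nlevel n t)%N.
Proof. by rewrite eqn0Ngt !nlevel_gt0 -leqNgt eqn_leq. Qed.

Section LevelMoments.
Context {R : realType}.

Definition level_weight (n : nat) (t : ptree) : R :=
  (4%:R ^+ nedges t)^-1 * (nlevel n.+1 t == 0)%:R * 2%:R ^+ nlevel n t.

Lemma level_weight_ge0 n t : 0 <= level_weight n t.
Proof. by rewrite /level_weight !mulr_ge0 ?invr_ge0 ?exprn_ge0. Qed.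

Lemma level_weight_node n ts :
  4%:R ^+ size ts * level_weight n.+1 (PNode ts) = \prod_(t <- ts) level_weight n t.
Proof.
elim: ts => [|t ts IH]; first by rewrite /level_weight /nedges big_nil /= invr1 !mul1r.
rewrite big_cons -IH /level_weight /nedges /= addn_eq0 -mulnb natrM !exprD.
rewrite nverts_nedges succnK exprS [4%:R ^+ (nedges t).+1]exprS !invfM.
by field; rewrite !expf_neq0 // pnatr_eq0.
Qed.

Definition level_moment (n j : nat) : \bar R :=
  \esum_(t in [set: ptree]) (level_weight n t * 'C(nlevel n t, j)%:R)%:E.

Definition moment (n j : nat) : R := if j is j'.+1 then 2 * n%:R ^+ j' else 2.

Lemma moment_ge0 n j : 0 <= moment n j.
Proof. by case: j => [|j] //=; rewrite mulr_ge0 ?exprn_ge0. Qed.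

Lemma level_moment0 j : level_moment 0 j = (moment 0 j)%:E.
Proof.
have term_ge0 t : (0 <= (level_weight 0 t * 'C(nlevel 0 t, j)%:R)%:E)%E.
  by rewrite lee_fin mulr_ge0 ?level_weight_ge0.
rewrite /level_moment (esumID [set PNode [::]]) // setTI esum_set1 //.
rewrite esum1 ?adde0; last first.
  by move=> [[|t ts]] [_ //=]; rewrite /level_weight /= mulr0 !mul0r.
rewrite /level_weight /nedges /= invr1 !mul1r {term_ge0}.
case: j => [|[|j]] //=; first by rewrite expr1 bin0 mulr1.
by rewrite bin_small // mulr0 exprS mul0r mulr0.
Qed.

Definition forest_weight (n : nat) (ts : seq ptree) (j : nat) : R :=
  (4%:R ^+ size ts)^-1 * \prod_(t <- ts) level_weight n t *
  'C(sumn (map (nlevel n) ts), j)%:R.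

Lemma forest_weight_ge0 n ts j : 0 <= forest_weight n ts j.
Proof.
rewrite /forest_weight !mulr_ge0 ?invr_ge0 ?exprn_ge0 ?prodr_ge0 // => t _.
exact: level_weight_ge0.
Qed.

Lemma level_momentS n j :
  level_moment n.+1 j = \esum_(ts in [set: seq ptree]) (forest_weight n ts j)%:E.
Proof.
rewrite /level_moment (reindex_esum [set: seq ptree] [set: ptree] PNode); last first.
  by split=> [//|x y _ _ []//|[ts] _]; exists ts.
apply: eq_esum => ts _; congr (_%:E).
rewrite /forest_weight -level_weight_node /=.
by field; rewrite expf_neq0 // pnatr_eq0.
Qed.

Lemma forest_weight_cons n t ts j : forest_weight n (t :: ts) j =
  \sum_(i < j.+1)
    (level_weight n t * 'C(nlevel n t, i)%:R / 4) * forest_weight n ts (j - i).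
Proof.
rewrite /forest_weight /= big_cons -binomial.Vandermonde natr_sum mulr_sumr.
by apply: eq_bigr => i _; rewrite natrM exprS invfM; ring.
Qed.

Lemma esum_forest_weight_size n (m : nat -> R) :
  (forall i, level_moment n i = (m i)%:E) -> forall d j,
  \esum_(ts in [set ts | size ts = d]) (forest_weight n ts j)%:E =
  (convpow (fun i => m i / 4) d j)%:E.
Proof.
move=> moment_m; have m_ge0 i : 0 <= m i.
  rewrite -lee_fin -moment_m esum_ge0 // => t _.
  by rewrite lee_fin mulr_ge0 ?level_weight_ge0.
have term_ge0 i t ts j :
    0 <= level_weight n t * 'C(nlevel n t, i)%:R / 4 * forest_weight n ts j.
  by rewrite mulr_ge0 ?forest_weight_ge0 // divr_ge0 // mulr_ge0 ?level_weight_ge0.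
elim=> [|d IH] j.
  rewrite esum_size0; last by rewrite lee_fin forest_weight_ge0.
  by rewrite /forest_weight /= big_nil bin0n expr0 invr1 !mul1r.
rewrite esum_sizeS; last by move=> ts; rewrite lee_fin forest_weight_ge0.
have inner t : \esum_(ts in [set ts | size ts = d]) (forest_weight n (t :: ts) j)%:E =
    (\sum_(i < j.+1) (level_weight n t * 'C(nlevel n t, i)%:R / 4)%:E *
                     (convpow (fun i => m i / 4) d (j - i))%:E)%E.
  under eq_esum => ts _ do rewrite forest_weight_cons -sumEFin.
  rewrite esum_sum; last by move=> *; rewrite lee_fin term_ge0.
  apply: eq_bigr => i _; under eq_esum => ts _ do rewrite EFinM.
  rewrite esumZl ?IH // => [|ts]; last by rewrite lee_fin forest_weight_ge0.
  by rewrite divr_ge0 // mulr_ge0 ?level_weight_ge0.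
under eq_esum => t _ do rewrite inner.
rewrite esum_sum; last first.
  move=> t i _ _; rewrite -EFinM lee_fin mulr_ge0 ?convpow_ge0 //.
    by rewrite divr_ge0 // mulr_ge0 ?level_weight_ge0.
  by move=> k; rewrite divr_ge0.
rewrite /= -sumEFin; apply: eq_bigr => i _.
have weight_ge0 t : (0 <= (level_weight n t * 'C(nlevel n t, i)%:R)%:E)%E.
  by rewrite lee_fin mulr_ge0 ?level_weight_ge0.
under eq_esum => t _ do rewrite muleC (mulrC _ 4^-1).
rewrite esumZl; last by move=> t; rewrite EFinM mule_ge0.
  under eq_esum => t _ do rewrite EFinM.
  rewrite esumZl // -/(level_moment n i) moment_m -!EFinM.
  by congr (_%:E); ring.
by rewrite convpow_ge0 // => k; rewrite divr_ge0.
Qed.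

Lemma sum_moment_geom n m :
  \sum_(i < m.+1) n%:R ^+ i * moment n.+1 (m - i) = 2 * n.+1%:R ^+ m :> R.
Proof.
elim: m => [|m IH]; first by rewrite big_ord1 /= !expr0 mul1r mulr1.
rewrite big_ord_recl subn0 /=.
under eq_bigr => i _ do rewrite /bump /= add1n subSS exprS -mulrA.
by rewrite -mulr_sumr IH exprS -natr1; ring.
Qed.

Lemma moment_rec n j : moment n.+1 j =
  (j == 0)%:R + \sum_(i < j.+1) moment n i / 4 * moment n.+1 (j - i).
Proof.
case: j => [|m]; first by rewrite big_ord1 /=; field.
rewrite big_ord_recl /= add0r.
under eq_bigr => i _ do rewrite /bump /= add1n add0n subSS.
rewrite (eq_bigr (fun i : 'I_m.+1 => n%:R ^+ i * moment n.+1 (m - i) / 2)); last first.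
  by move=> i _ /=; field.
by rewrite -mulr_suml sum_moment_geom; field.
Qed.

Lemma level_moment_closed n j : level_moment n j = (moment n j)%:E.
Proof.
elim: n j => [|n IH] j; first exact: level_moment0.
rewrite level_momentS.
have -> : [set: seq ptree] = \bigcup_(d in [set: nat]) [set ts | size ts = d].
  by apply/seteqP; split => ts // _; exists (size ts).
rewrite esum_bigcupT; first last.
- by move=> ts; rewrite lee_fin forest_weight_ge0.
- by move=> d d' _ _ [ts [/= <- <-]].
rewrite -nneseries_esumT; last first.
  by move=> d; rewrite esum_ge0 // => ts _; rewrite lee_fin forest_weight_ge0.
under eq_eseriesr => d _ do rewrite (esum_forest_weight_size _ _ IH).
apply: convpow_eseries.
- by move=> i; rewrite divr_ge0 ?moment_ge0.
- exact: moment_ge0.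
- exact: moment_rec.
- by apply/eqP => /=; lra.
Qed.

End LevelMoments.

Section PlantedTrees.
Context {R : realType}.

Definition xi_sum (mu : R) (K : nat) : R :=
  \sum_(1 <= j < K.+1) 'C(K, j)%:R * mu ^+ j.-1 / j.-1`!%:R.

Lemma xi_sum_eseries mu K : 0 <= mu ->
  (xi_sum mu K)%:E = (\sum_(i <oo) ('C(K, i.+1)%:R * mu ^+ i / i`!%:R)%:E)%E.
Proof.
move=> mu_ge0; rewrite (nneseries_split 0 K); last first.
  by move=> k _; rewrite lee_fin !mulr_ge0 ?invr_ge0 ?exprn_ge0.
rewrite add0n eseries0 ?adde0; last by move=> i Ki _; rewrite bin_small ?mul0r.
by rewrite sumEFin /xi_sum big_add1.
Qed.

Lemma esum_level_weight_xi_sum n mu : 0 <= mu ->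
  \esum_(s in [set: ptree]) (level_weight n s * xi_sum mu (nlevel n s))%:E =
  (2 * expR (mu * n%:R))%:E.
Proof.
move=> mu_ge0.
have coef_ge0 i : 0 <= mu ^+ i / i`!%:R by rewrite divr_ge0 ?exprn_ge0.
under eq_esum => s _.
  rewrite EFinM xi_sum_eseries // -nneseriesZl; last first.
    by move=> i _; rewrite lee_fin !mulr_ge0 ?invr_ge0 ?exprn_ge0.
  rewrite nneseries_esumT; last first.
    by move=> i; rewrite -EFinM lee_fin !mulr_ge0 ?level_weight_ge0 ?invr_ge0 ?exprn_ge0.
  rewrite (eq_esum (b := fun i => ((mu ^+ i / i`!%:R)%:E *
    (level_weight n s * 'C(nlevel n s, i.+1)%:R)%:E)%E)); last first.
    by move=> i _; rewrite -!EFinM; congr (_%:E); ring.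
  over.
rewrite exchange_esum; last first.
  by move=> s i; rewrite -EFinM lee_fin mulr_ge0 // mulr_ge0 ?level_weight_ge0.
under eq_esum => i _.
  rewrite esumZl //; last by move=> s; rewrite lee_fin mulr_ge0 ?level_weight_ge0.
  rewrite -/(level_moment n i.+1) level_moment_closed /= -EFinM.
  over.
rewrite -nneseries_esumT; last by move=> i; rewrite lee_fin mulr_ge0 // mulr_ge0 ?exprn_ge0.
rewrite (eq_eseriesr (g := fun i => (2%:E * ((mu * n%:R) ^+ i / i`!%:R)%:E)%E)); last first.
  by move=> i _; rewrite -EFinM exprMn; congr (_%:E); ring.
rewrite nneseriesZl ?expR_eseries // => i _.
by rewrite lee_fin divr_ge0 // exprn_ge0 // mulr_ge0.
Qed.

Lemma esum_root_deg1 (f : ptree -> \bar R) n :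
  \esum_(t in [set t | root_deg1 t /\ height t = n.+1]) f t =
  \esum_(s in [set s | height s = n]) f (PNode [:: s]).
Proof.
apply: reindex_esum; split.
- by move=> s /= s_n; rewrite maxn0 s_n.
- by move=> s1 s2 _ _ [].
- move=> [[|s [|? ?]]] [//= _]; rewrite maxn0 => -[s_n].
  by exists s.
Qed.

Lemma Xi_planted mu s : Xi mu (PNode [:: s]) =
  expR (- mu * (height s)%:R) / 2 * level_weight (height s) s *
  xi_sum mu (nlevel (height s) s).
Proof.
have above_s : nlevel (height s).+1 s = 0 by apply/eqP; rewrite eqn0Ngt nlevel_gt0 ltnn.
rewrite /Xi; cbv zeta.
have -> : height (PNode [:: s]) = (height s).+1 by rewrite /= maxn0.
have -> : nlevel (height s).+1 (PNode [:: s]) = nlevel (height s) s by rewrite /= addn0.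
have -> : nedges (PNode [:: s]) = (nedges s).+1 by rewrite /nedges /= addn0 nverts_nedges.
rewrite /level_weight above_s -/(xi_sum mu _) mulrSr addrK !exprS invfM.
rewrite eqxx mulr1; field.
by rewrite expf_neq0 // pnatr_eq0.
Qed.

Lemma level_weight_xi_sum_eq0 mu n s : height s != n ->
  level_weight n s * xi_sum mu (nlevel n s) = 0.
Proof.
rewrite height_eqE negb_and => /orP[|].
  by rewrite /level_weight => /negbTE ->; rewrite mulr0 !mul0r.
by rewrite lt0n negbK => /eqP ->; rewrite /xi_sum big_geq // mulr0.
Qed.

End PlantedTrees.

Theorem mainTheorem12 (R : realType) (mu : R) (hmu : 0 < mu) (r : nat) (hr : (1 <= r)%N) :
  \esum_(t in [set t : ptree | root_deg1 t /\ height t = r]) (Xi mu t)%:E = 1%E.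
Proof.
case: r hr => // n _; rewrite esum_root_deg1 esum_mkcond.
set c := expR (- mu * n%:R) / 2.
have c_ge0 : 0 <= c by rewrite divr_ge0 ?expR_ge0.
have term_ge0 s : (0 <= (level_weight n s * xi_sum mu (nlevel n s))%:E)%E.
  rewrite lee_fin mulr_ge0 ?level_weight_ge0 // sumr_ge0 // => j _.
  by rewrite mulr_ge0 ?invr_ge0 // mulr_ge0 // exprn_ge0 // ltW.
rewrite (eq_esum (b := fun s => (c%:E * (level_weight n s * xi_sum mu (nlevel n s))%:E)%E)).
  rewrite esumZl // esum_level_weight_xi_sum ?ltW // -EFinM.
  congr (_%:E); rewrite /c mulNr -[RHS](expRxMexpNx_1 (mu * n%:R)).
  by field.
move=> s _; rewrite -EFinM; case: ifPn => [/set_mem /= s_n|/negP s_n].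
  by rewrite Xi_planted s_n -mulrA.
rewrite level_weight_xi_sum_eq0 ?mulr0 //.
by apply: contra_not_neq s_n => <-; rewrite in_setE.
Qed.
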